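(* $\mathcal{A}(\bm{p})$ is a Hermite ring, i.e. every finitely generated stably free $\mathcal{A}(\bm{p})$-module is free. Equivalently, for all $k<K$ in $\mathbb{N}$ and every $f\in\mathcal{A}(\bm{p})^{K\times k}$ admitting $g\in\mathcal{A}(\bm{p})^{k\times K}$ with $g\ast f=I_k$, there exist $f_c\in\mathcal{A}(\bm{p})^{K\times(K-k)}$ and $G\in\mathcal{A}(\bm{p})^{K\times K}$ with $G\ast[f\ \ f_c]=I_K$.
   Context: Fix $\bm{p}:\mathbb{N}_0\to(0,\infty)$ with $\lim_{n\to\infty}\bm{p}(n)^{1/n}=\infty$. For an entire function $f$ write $f(z)=\sum_{n\ge0}\widehat f(n)z^n$. $\mathcal{A}(\bm{p})$ is the set of entire functions $f$ with $\sup_{n\ge 0}\bm{p}(n)|\widehat f(n)|<\infty$, with pointwise addition and scalar multiplication, the weighted Hadamard product $(f\ast g)(z)=\sum_{n\ge0}\bm{p}(n)\widehat f(n)\widehat g(n)z^n$, and norm $\|f\|=\sup_{n\ge0}\bm{p}(n)|\widehat f(n)|$. It is a commutative unital ring with unit $\varepsilon(z)=\sum_{n\ge0}\frac{z^n}{\bm{p}(n)}$; matrix products use $\ast$ and $I_k$ is the $k\times k$ diagonal matrix with diagonal entries $\varepsilon$. *)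

From mathcomp Require Import all_boot all_algebra.
From mathcomp Require Import all_classical all_reals all_analysis.
From mathcomp Require Export complex.
Import GRing.Theory Num.Theory numFieldNormedType.Exports.
Set Implicit Arguments.
Unset Strict Implicit.
Unset Printing Implicit Defensive.
Local Open Scope classical_set_scope.
Local Open Scope ring_scope.

(* An entire function f(z) = sum_n fhat(n) z^n is represented by its Taylor
   coefficient sequence a : nat -> R[i]. *)

Definition entire_coeffs (R : realType) (a : nat -> R[i]) : Prop :=
  forall r : R, 0 <= r -> cvg (series (fun n => (Normc.normc (a n) : R) * r ^+ n : R) @ \oo).

Definition inA (R : realType) (p : nat -> R) (a : nat -> R[i]) : Prop :=
  entire_coeffs a /\ exists M : R, forall n, p n * Normc.normc (a n) <= M.

(* weighted Hadamard product: (f * g)^(n) = p(n) fhat(n) ghat(n) *)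
Definition hadp (R : realType) (p : nat -> R) (a b : nat -> R[i]) : nat -> R[i] :=
  fun n => (real_complex R (p n) * a n * b n)%R.

Definition epsA (R : realType) (p : nat -> R) : nat -> R[i] :=
  fun n => real_complex R ((p n)^-1).

Definition zeroA (R : realType) : nat -> R[i] := fun _ => 0.

Definition mxmulA (R : realType) (p : nat -> R) (m n l : nat)
    (A : 'M[nat -> R[i]]_(m, n)) (B : 'M[nat -> R[i]]_(n, l))
    : 'M[nat -> R[i]]_(m, l) :=
  \matrix_(i < m, j < l) (fun t => \sum_(h < n) hadp p (A i h) (B h j) t).

(* identity-type matrix: epsilon on the diagonal (i = j as naturals), 0 off it.
   For m = n this is I_n. *)
Definition idA (R : realType) (p : nat -> R) (m n : nat) : 'M[nat -> R[i]]_(m, n) :=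
  \matrix_(i < m, j < n) (if (i : nat) == j then epsA p else zeroA R).

Definition mxinA (R : realType) (p : nat -> R) (m n : nat)
    (A : 'M[nat -> R[i]]_(m, n)) : Prop :=
  forall i j, inA p (A i j).

From mathcomp Require Import all_boot all_order all_algebra.
From mathcomp Require Import all_classical all_reals all_analysis.
From mathcomp Require Import complex spectral sesquilinear.
From mathcomp Require Import lra.
Import Order.TTheory GRing.Theory Num.Theory numFieldNormedType.Exports.
Local Open Scope classical_set_scope.
Local Open Scope ring_scope.
Local Open Scope complex_scope.
Set Implicit Arguments.
Unset Strict Implicit.
Unset Printing Implicit Defensive.

(* Scaling the coefficients, f |-> (p(t) fhat(t))_t, turns the weighted
   Hadamard product into the pointwise product and epsilon into the constant
   sequence 1; membership in A(p) becomes uniform boundedness of the scaled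
   coefficients (entireness is automatic because p(n)^(1/n) -> oo).  So a
   left-invertible matrix f over A(p) gives, for each index t, a left-invertible
   complex matrix F_t with left inverse g_t, all entries uniformly bounded.

   For a complex K x k matrix F with left inverse g, pick W whose K - k rows
   are orthonormal and orthogonal to the rows of g; then [g; W (1 - F g)] is a
   left inverse of [F W^*], and all entries are bounded in terms of K, k and
   the bounds on F and g only.  Applying this at every t and scaling back
   yields the completion fc and the left inverse G inside A(p). *)

Definition natdelta_mx (T : pzSemiRingType) (m n : nat) : 'M[T]_(m, n) :=
  \matrix_(i < m, j < n) ((i : nat) == j)%:R.

Lemma natdelta_mx1 (T : pzSemiRingType) (n : nat) : natdelta_mx T n n = 1%:M.
Proof. by apply/matrixP => i j; rewrite !mxE. Qed.

Lemma castmx_mulmx (T : pzSemiRingType) m m' n l (e : m = m')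
    (A : 'M[T]_(m, n)) (B : 'M[T]_(n, l)) :
  castmx (e, erefl n) A *m B = castmx (e, erefl l) (A *m B).
Proof. by case: m' / e. Qed.

Section BoundedCompletion.
Local Open Scope sesquilinear_scope.
Variable C : numClosedFieldType.

Lemma trmxC_mul m n l (A : 'M[C]_(m, n)) (B : 'M[C]_(n, l)) :
  (A *m B)^t* = B^t* *m A^t*.
Proof. by rewrite trmx_mul map_mxM. Qed.

(* If g has full row rank k, some (K - k) x K matrix W has orthonormal rows,
   all orthogonal to the rows of g (Gram-Schmidt on the orthogonal of g). *)
Lemma orthonormal_complement K k (g : 'M[C]_(k, K)) : \rank g = k ->
  exists W : 'M[C]_(K - k, K), W *m W^t* = 1%:M /\ g *m W^t* = 0.
Proof.
move=> rank_g.
pose X := orthomx (@Num.conj C) (mx_of_hermitian (hermitian1mx _)) g.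
suff [r [W [r_eq [W_unitary Wg]]]] : exists r (W : 'M[C]_(r, K)),
    r = (K - k)%N /\ W *m W^t* = 1%:M /\ W *m g^t* = 0.
  subst r; exists W; split=> //.
  by rewrite -[g]trmxCK -trmxC_mul Wg trmx0 map_mx0.
exists (\rank X), (schmidt (row_base X)); split; first by rewrite rank_ortho rank_g.
split; first by apply/unitarymxP; rewrite schmidt_unitarymx // rank_leq_col.
by apply/orthomx1P; rewrite eqmx_schmidt_free ?row_base_free // eq_row_base.
Qed.

Lemma unitary_entry_le1 r n (W : 'M[C]_(r, n)) : W *m W^t* = 1%:M ->
  forall i j, `|W i j| <= 1.
Proof.
move=> W_unitary i j; have := congr1 (fun M : 'M[C]_r => M i i) W_unitary.
rewrite !mxE eqxx /= (bigD1 j) //= !mxE -normCK => row_norm.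
rewrite -(@expr_le1 _ 2) ?normr_ge0 // -[X in _ <= X]row_norm lerDl.
by apply: sumr_ge0 => l _; rewrite !mxE mul_conjC_ge0.
Qed.

Lemma mulmx_entry_le m n l (A : 'M[C]_(m, n)) (B : 'M[C]_(n, l)) a b :
  0 <= a -> (forall i j, `|A i j| <= a) -> (forall i j, `|B i j| <= b) ->
  forall i j, `|(A *m B) i j| <= n%:R * (a * b).
Proof.
move=> a_ge0 A_le B_le i j; rewrite mxE (le_trans (ler_norm_sum _ _ _)) //.
rewrite mulr_natl -[n in _ *+ n]card_ord -sumr_const.
by apply: ler_sum => h _; rewrite normrM ler_pM ?normr_ge0.
Qed.

Lemma completion_left_inverse K k (F : 'M[C]_(K, k)) (g : 'M[C]_(k, K))
    (W : 'M[C]_(K - k, K)) :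
  g *m F = 1%:M -> W *m W^t* = 1%:M -> g *m W^t* = 0 ->
  col_mx g (W *m (1%:M - F *m g)) *m row_mx F (W^t*) = 1%:M.
Proof.
move=> gF W_unitary gW.
rewrite mul_col_row gF gW -!mulmxA !mulmxBl !mul1mx -!mulmxA gF gW.
by rewrite mulmx1 mulmx0 subrr subr0 mulmx0 W_unitary -scalar_mx_block.
Qed.

(* This uniformity is what makes the construction work in A(p). *)
Lemma bounded_completion K k (F : 'M[C]_(K, k)) (g : 'M[C]_(k, K)) (a b : C) :
  (k <= K)%N -> 0 <= a -> 0 <= b ->
  (forall i j, `|F i j| <= a) -> (forall i j, `|g i j| <= b) -> g *m F = 1%:M ->
  exists (fc : 'M[C]_(K, K - k)) (G : 'M[C]_(K, K)),
    [/\ forall i j, `|fc i j| <= 1,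
        forall i j, `|G i j| <= b + K%:R * (1 + k%:R * (a * b)) &
        G *m row_mx F fc = natdelta_mx _ K (k + (K - k))].
Proof.
move=> le_kK a_ge0 b_ge0 F_le g_le gF.
have rank_g : \rank g = k.
  by apply/eqP; rewrite eqn_leq rank_leq_row -{1}(mxrank1 C k) -gF mxrankM_maxl.
have [W [W_unitary gW]] := orthonormal_complement rank_g.
have W_le := unitary_entry_le1 W_unitary.
pose P := 1%:M - F *m g.
have P_le i j : `|P i j| <= 1 + k%:R * (a * b).
  rewrite !mxE (le_trans (ler_normB _ _)) // lerD //.
    by case: (i == j); rewrite ?normr1 ?normr0.
  by have := mulmx_entry_le a_ge0 F_le g_le i j; rewrite mxE.
exists (W^t*), (castmx (subnKC le_kK, erefl K) (col_mx g (W *m P))); split.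
- by move=> i j; rewrite !mxE norm_conjC W_le.
- move=> i j; rewrite castmxE /=.
  case: (split_ordP (cast_ord (esym (subnKC le_kK)) i)) => i' ->.
    rewrite col_mxEu (le_trans (g_le _ _)) // lerDl mulr_ge0 // addr_ge0 //.
    by rewrite mulr_ge0 // mulr_ge0.
  rewrite col_mxEd cast_ord_id (le_trans (mulmx_entry_le ler01 W_le P_le i' j)) //.
  by rewrite mul1r lerDr.
- apply/matrixP => i j.
  by rewrite castmx_mulmx completion_left_inverse // castmxE !mxE.
Qed.

End BoundedCompletion.

Lemma normc_complexE (R : realType) (x : R[i]) : `|x| = (Normc.normc x)%:C.
Proof. by []. Qed.

Lemma normc_real (R : realType) (x : R) : Normc.normc x%:C = `|x|.
Proof. by rewrite /Normc.normc /= expr0n /= addr0 sqrtr_sqr. Qed.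

Lemma normc_ge0 (R : realType) (x : R[i]) : 0 <= Normc.normc x.
Proof. by case: x => a b; exact: sqrtr_ge0. Qed.

Lemma series_cvg_eventually_geometric (R : realType) (u : R ^nat) N (B : R) :
  (forall n, 0 <= u n) -> (forall n, (N < n)%N -> u n <= B * 2^-1 ^+ n) ->
  cvgn (series u).
Proof.
move=> u_ge0 u_le.
pose C0 := `|B| + \sum_(m < N.+1) u m * 2 ^+ m.
have C0_ge0 : 0 <= C0 by rewrite addr_ge0 // sumr_ge0 // => m _; rewrite mulr_ge0.
apply: (@series_le_cvg _ u (geometric C0 2^-1)) => //.
- by move=> n; rewrite /= mulr_ge0.
- move=> n /=; have [ltNn | lenN] := ltnP N n.
    rewrite (le_trans (u_le n ltNn)) // ler_wpM2r // (le_trans (ler_norm B)) //.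
    by rewrite lerDl sumr_ge0 // => m _; rewrite mulr_ge0.
  have -> : u n = u n * 2 ^+ n * 2^-1 ^+ n.
    by rewrite -mulrA -exprMn mulfV ?expr1n ?mulr1.
  rewrite ler_wpM2r //.
  have ltnN1 : (n < N.+1)%N by [].
  rewrite /C0 (bigD1 (Ordinal ltnN1)) //= addrCA lerDl addr_ge0 //.
  by rewrite sumr_ge0 // => m _; rewrite mulr_ge0.
- by apply: is_cvg_geometric_series; rewrite ger0_norm //; lra.
Qed.

Section GrowingWeight.
Variables (R : realType) (p : nat -> R).
Hypothesis p_pos : forall n, 0 < p n.
Hypothesis p_growth : (fun n => p n `^ (n%:R)^-1) @ \oo --> +oo.

Lemma weight_dominates_geometric (A : R) : 0 < A ->
  exists N, forall n, (N < n)%N -> A ^+ n <= p n.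
Proof.
move=> A_gt0; have [N _ A_le_root] := (cvgryPge _).1 p_growth A.
exists N => n ltNn.
have n_neq0 : n%:R != 0 :> R by rewrite pnatr_eq0 -lt0n (leq_ltn_trans _ ltNn).
have -> : p n = (p n `^ (n%:R)^-1) ^+ n.
  by rewrite -powR_mulrn ?powR_ge0 // -powRrM mulVf // powRr1 // ltW.
rewrite lerXn2r ?nnegrE ?powR_ge0 ?(ltW A_gt0) //; exact: A_le_root (ltnW ltNn).
Qed.

(* A coefficient sequence with sup_n p(n)|a(n)| < oo defines an entire function:
   on the disc of radius r, |a(n)| r^n <= B (r / (2r+1))^n <= B 2^-n eventually. *)
Lemma entire_of_weighted_bound (a : nat -> R[i]) (B : R) :
  (forall n, p n * Normc.normc (a n) <= B) -> entire_coeffs a.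
Proof.
move=> a_le r r_ge0.
have B_ge0 : 0 <= B by rewrite (le_trans _ (a_le 0%N)) // mulr_ge0 ?normc_ge0 // ltW.
have A_gt0 : 0 < 2 * r + 1 by lra.
have [N p_ge] := weight_dominates_geometric A_gt0.
apply: (@series_cvg_eventually_geometric _ _ N B) => n.
  by rewrite mulr_ge0 ?normc_ge0 ?exprn_ge0.
move=> ltNn; have pn_ge := p_ge n ltNn.
have an_le : Normc.normc (a n) <= B / (2 * r + 1) ^+ n.
  rewrite ler_pdivlMr ?exprn_gt0 // mulrC (le_trans _ (a_le n)) //.
  by rewrite ler_wpM2r ?normc_ge0.
rewrite (le_trans (ler_wpM2r (exprn_ge0 _ r_ge0) an_le)) // -mulrA ler_wpM2l //.
rewrite -exprVn -exprMn lerXn2r ?nnegrE ?mulr_ge0 ?invr_ge0 ?(ltW A_gt0) //.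
by rewrite ler_pdivrMl //; lra.
Qed.

End GrowingWeight.

Section ScaledCoefficients.
Variables (R : realType) (p : nat -> R).
Hypothesis p_pos : forall n, 0 < p n.
Hypothesis p_growth : (fun n => p n `^ (n%:R)^-1) @ \oo --> +oo.

Lemma weight_scaleK t : (p t)%:C * ((p t)^-1)%:C = 1 :> R[i].
Proof. by rewrite -rmorphM mulfV ?rmorph1 // gt_eqF. Qed.

Definition scaled_coeffs m n (A : 'M[nat -> R[i]]_(m, n)) (t : nat)
    : 'M[R[i]]_(m, n) :=
  \matrix_(i, j) ((p t)%:C * A i j t).

Definition of_scaled_coeffs m n (M : nat -> 'M[R[i]]_(m, n))
    : 'M[nat -> R[i]]_(m, n) :=
  \matrix_(i, j) (fun t => ((p t)^-1)%:C * M t i j).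

Lemma of_scaled_coeffsK m n (M : nat -> 'M[R[i]]_(m, n)) t :
  scaled_coeffs (of_scaled_coeffs M) t = M t.
Proof. by apply/matrixP => i j; rewrite !mxE mulrA weight_scaleK mul1r. Qed.

Lemma scaled_coeffs_inj m n (A B : 'M[nat -> R[i]]_(m, n)) :
  (forall t, scaled_coeffs A t = scaled_coeffs B t) -> A = B.
Proof.
move=> eqAB; apply/matrixP => i j; apply: funext => t.
have /matrixP /(_ i j) := eqAB t; rewrite !mxE.
move=> /(congr1 (GRing.mul ((p t)^-1)%:C)).
by rewrite !mulrA [_ * (p t)%:C]mulrC weight_scaleK !mul1r.
Qed.

Lemma scaled_coeffs_mul m n l (A : 'M[nat -> R[i]]_(m, n))
    (B : 'M[nat -> R[i]]_(n, l)) t :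
  scaled_coeffs (mxmulA p A B) t = scaled_coeffs A t *m scaled_coeffs B t.
Proof.
apply/matrixP => i j; rewrite !mxE mulr_sumr; apply: eq_bigr => h _.
by rewrite !mxE /hadp !mulrA; congr (_ * _); rewrite mulrAC.
Qed.

Lemma scaled_coeffs_idA m n t : scaled_coeffs (idA p m n) t = natdelta_mx _ m n.
Proof.
apply/matrixP => i j; rewrite !mxE.
by case: eqP => _; rewrite /epsA /zeroA ?weight_scaleK ?mulr0.
Qed.

Lemma scaled_coeffs_row_mx m n1 n2 (A : 'M[nat -> R[i]]_(m, n1))
    (B : 'M[nat -> R[i]]_(m, n2)) t :
  scaled_coeffs (row_mx A B) t = row_mx (scaled_coeffs A t) (scaled_coeffs B t).
Proof.
apply/matrixP => i j; case: (split_ordP j) => j' ->;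
by rewrite mxE ?row_mxEl ?row_mxEr mxE.
Qed.

Lemma norm_weighted t (x : R[i]) : `|(p t)%:C * x| = (p t * Normc.normc x)%:C.
Proof. by rewrite normc_complexE Normc.normcM normc_real gtr0_norm. Qed.

Lemma scaled_coeffs_bounded m n (A : 'M[nat -> R[i]]_(m, n)) : mxinA p A ->
  exists b : R, 0 <= b /\ forall t i j, `|scaled_coeffs A t i j| <= b%:C.
Proof.
move=> A_in.
have : forall ij : 'I_m * 'I_n, exists bound : R,
    forall t, p t * Normc.normc (A ij.1 ij.2 t) <= bound.
  by move=> ij; exact: (A_in ij.1 ij.2).2.
case/choice => bound A_le.
have bound_ge0 ij : 0 <= bound ij.
  by rewrite (le_trans _ (A_le ij 0%N)) // mulr_ge0 ?normc_ge0 // ltW.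
exists (\sum_ij bound ij); split=> [|t i j]; first exact: sumr_ge0.
rewrite mxE norm_weighted lecR (le_trans (A_le (i, j) t)) //.
by rewrite (bigD1 (i, j)) //= lerDl sumr_ge0.
Qed.

Lemma mxinA_of_scaled_coeffs m n (M : nat -> 'M[R[i]]_(m, n)) (b : R) :
  (forall t i j, `|M t i j| <= b%:C) -> mxinA p (of_scaled_coeffs M).
Proof.
move=> M_le i j; have entry_le t : p t * Normc.normc (of_scaled_coeffs M i j t) <= b.
  by have := M_le t i j; rewrite -(of_scaled_coeffsK M t) mxE norm_weighted lecR.
by split; [exact: entire_of_weighted_bound entry_le | exists b].
Qed.

End ScaledCoefficients.

Theorem mainTheorem3 (R : realType) (p : nat -> R)
  (p_pos : forall n, 0 < p n)
  (p_growth : (fun n => p n `^ (n%:R)^-1) @ \oo --> +oo)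
  (k K : nat) (hkK : (k < K)%N)
  (f : 'M[nat -> R[i]]_(K, k)) (hf : mxinA p f)
  (hinv : exists g : 'M[nat -> R[i]]_(k, K),
            mxinA p g /\ mxmulA p g f = idA p k k) :
  exists (fc : 'M[nat -> R[i]]_(K, K - k)) (G : 'M[nat -> R[i]]_(K, K)),
    mxinA p fc /\ mxinA p G /\
    mxmulA p G (row_mx f fc) = idA p K (k + (K - k)).
Proof.
have [g [g_in gf]] := hinv.
have [a [a_ge0 f_le]] := scaled_coeffs_bounded p_pos hf.
have [b [b_ge0 g_le]] := scaled_coeffs_bounded p_pos g_in.
pose bound : R := b + K%:R * (1 + k%:R * (a * b)).
have completion t : exists fcG : 'M[R[i]]_(K, K - k) * 'M[R[i]]_(K, K),
    [/\ forall i j, `|fcG.1 i j| <= 1%:C, forall i j, `|fcG.2 i j| <= bound%:C &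
        fcG.2 *m row_mx (scaled_coeffs p f t) fcG.1 = natdelta_mx _ K (k + (K - k))].
  have gf_t : scaled_coeffs p g t *m scaled_coeffs p f t = 1%:M.
    by rewrite -scaled_coeffs_mul gf scaled_coeffs_idA // natdelta_mx1.
  have [||fc [G [fc_le G_le fcG]]] :=
    bounded_completion (ltnW hkK) _ _ (f_le t) (g_le t) gf_t.
  1,2: by rewrite lecR.
  by exists (fc, G); split; rewrite /= ?rmorph1 /bound ?(rmorphD, rmorphM, rmorph_nat).
have [fcG fcG_spec] := choice completion.
exists (of_scaled_coeffs p (fun t => (fcG t).1)),
       (of_scaled_coeffs p (fun t => (fcG t).2)).
split; [|split].
- by apply: (mxinA_of_scaled_coeffs p_pos p_growth (b := 1)) => t;
    case: (fcG_spec t).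
- by apply: (mxinA_of_scaled_coeffs p_pos p_growth (b := bound)) => t;
    case: (fcG_spec t).
apply: (scaled_coeffs_inj p_pos) => t.
rewrite scaled_coeffs_mul scaled_coeffs_row_mx !of_scaled_coeffsK //.
rewrite scaled_coeffs_idA //.
by case: (fcG_spec t).
Qed.
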